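(* Let $G$ be a finite Abelian group, $M\subseteq\mathbb{Z}\setminus\{0\}$ a finite set, and $S\subseteq G$ such that $G \leq M \diamond_1 S$. Let $t>0$ be an integer, and let \[S^{(t)}\triangleq\{(s,0,\dots, 0) : s \in S\} \cup \{(0,s,0,\dots,0) : s\in S\} \cup \cdots \cup\{(0,\dots,0,s) : s \in S\}\subseteq G^t.\] Then $G^{t}\leq M \diamond_t S^{(t)}$.
   Context: For a finite Abelian group $G$, a finite set $M\subseteq\mathbb{Z}\setminus\{0\}$ and $S=\{s_1,\dots,s_n\}\subseteq G$, we write $G\le M\diamond_t S$ (“$M$ completely $t$-splits $G$ with splitter set $S$”) if for every $g\in G$ there is a vector $\mathbf{e}\in(M\cup\{0\})^n$ of Hamming weight at most $t$ such that $g=\sum_i e_is_i$ (with $e_is_i$ the $e_i$-fold group multiple). *)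

From HB Require Import structures.
From mathcomp Require Import all_boot all_order all_algebra.
Set Implicit Arguments. Unset Strict Implicit. Unset Printing Implicit Defensive.
Import GRing.Theory.
Local Open Scope ring_scope.

Definition completely_splits (G : finZmodType) (t : nat) (M : seq int)
    (S : {set G}) : Prop :=
  forall g : G, exists e : G -> int,
    (forall s, s \in S -> (e s \in M) \/ e s = 0) /\
    (#|[set s in S | e s != 0]| <= t)%N /\
    g = \sum_(s in S) s *~ e s.

HB.instance Definition _ (I : finType) (G : finZmodType) :=
  GRing.Zmodule.on {ffun I -> G}.

(* S^(t) \subseteq G^t, with G^t represented as {ffun 'I_t -> G}. *)
Definition splitter_power (G : finZmodType) (t : nat) (S : {set G})
    : {set {ffun 'I_t -> G}} :=
  [set [ffun j => if j == i then s else 0] | i in [set: 'I_t], s in S].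

From HB Require Import structures.
From mathcomp Require Import all_boot all_order all_algebra.
(* Split every coordinate g_i of g over S and move each term s *~ m into
   coordinate i, i.e. onto the element (0, .., s, .., 0) of S^(t).  Weight k in
   every coordinate gives weight at most t * k in G^t, and the coefficients
   stay in M because a vector (0, .., s, .., 0) with s != 0 determines both
   its coordinate i and s. *)

Set Implicit Arguments. Unset Strict Implicit. Unset Printing Implicit Defensive.
Import GRing.Theory.
Local Open Scope ring_scope.

Section EmbedAt.
Variables (I : finType) (G : zmodType).

Definition embed_at (i : I) (x : G) : {ffun I -> G} :=
  [ffun j => if j == i then x else 0].

Fact embed_at_is_zmod_morphism i : zmod_morphism (embed_at i).
Proof.
by move=> x y; apply/ffunP=> j; rewrite !ffunE; case: (j == i); rewrite ?subr0.
Qed.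

HB.instance Definition _ i :=
  GRing.isZmodMorphism.Build G {ffun I -> G} (embed_at i)
    (embed_at_is_zmod_morphism i).

Lemma embed_at_pair_inj (i j : I) (x y : G) :
  x != 0 -> embed_at i x = embed_at j y -> (i, x) = (j, y).
Proof.
move=> x_neq0 /ffunP eq_ij; have := eq_ij i; rewrite !ffunE eqxx.
by have [->|_] := eqVneq i j; [move->|move=> x0; rewrite x0 eqxx in x_neq0].
Qed.

Lemma embed_at_eq0 i x : (embed_at i x == 0) = (x == 0).
Proof.
apply/eqP/eqP=> [/ffunP/(_ i)|->]; last by rewrite raddf0.
by rewrite !ffunE eqxx.
Qed.

Lemma ffun_sum_embed_at (g : {ffun I -> G}) : g = \sum_i embed_at i (g i).
Proof.
apply/ffunP=> j; rewrite sum_ffunE (bigD1 j) //= big1 => [|i /negbTE ji].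
  by rewrite !ffunE eqxx addr0.
by rewrite ffunE eq_sym ji.
Qed.

End EmbedAt.

Section SplitterPower.
Variables (G : finZmodType) (M : seq int).

Definition is_splitting (k : nat) (S : {set G}) (g : G) (e : G -> int) :=
  [/\ forall s, s \in S -> (e s \in M) \/ e s = 0,
      (#|[set s in S | e s != 0]| <= k)%N
    & g = \sum_(s in S) s *~ e s].

Lemma exists_splitting_coef0 k S g :
  completely_splits k M S -> exists e, is_splitting k S g e /\ e 0 = 0.
Proof.
move=> /(_ g) [e [eM [supp_e ->]]].
exists (fun s => if s == 0 then 0 else e s); split; last by rewrite eqxx.
split=> [s /eM| |]; first by case: (s == 0); [right|].
- apply: leq_trans supp_e; apply/subset_leq_card/subsetP=> s.
  by rewrite !inE; case: (s == 0); rewrite ?eqxx ?andbF.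
- apply: eq_bigr=> s _.
  by have [->|] := eqVneq s 0; rewrite ?mul0rz ?mulr0z.
Qed.

Section PowerCoef.
Variables (t : nat) (S : {set G}) (e : 'I_t -> G -> int).
(* Every embed_at i 0 is the zero vector, which would otherwise collect the
   coefficients e i 0 of all coordinates. *)
Hypothesis e0 : forall i, e i 0 = 0.

Let pairs : {set 'I_t * G} := setX [set: 'I_t] S.
Let embed (p : 'I_t * G) := embed_at p.1 p.2.

Definition power_coef (f : {ffun 'I_t -> G}) : int :=
  \sum_(p in pairs | embed p == f) e p.1 p.2.

Lemma power_coef_embed_at i s : s \in S -> power_coef (embed_at i s) = e i s.
Proof.
move=> sS; have [->|s_neq0] := eqVneq s 0.
  rewrite e0 /power_coef big1 // => -[j x] /andP[_].
  by rewrite /embed raddf0 embed_at_eq0 => /eqP /= ->.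
rewrite /power_coef (bigD1 (i, s)) ?inE ?sS ?eqxx //= big1 ?addr0 // => -[j x].
by case/andP=> /andP[_ /eqP/esym/(embed_at_pair_inj s_neq0)[<- <-]]; rewrite eqxx.
Qed.

Lemma splitter_powerE : splitter_power t S = embed @: pairs.
Proof. by rewrite /splitter_power curry_imset2X; apply: eq_imset => -[]. Qed.

Lemma sum_splitter_power_coef :
  \sum_(f in splitter_power t S) f *~ power_coef f =
  \sum_i embed_at i (\sum_(s in S) s *~ e i s).
Proof.
transitivity (\sum_(p in pairs) embed p *~ e p.1 p.2).
  rewrite splitter_powerE [RHS](partition_big_imset embed).
  apply: eq_bigr=> f _; rewrite mulrz_sumr.
  by apply: eq_bigr=> p /andP[_ /eqP ->].
under [RHS]eq_bigr do rewrite raddf_sum; rewrite pair_big_dep.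
by apply: eq_big=> [p|p _]; rewrite ?inE ?raddfMz.
Qed.

Lemma card_power_support :
  (#|[set f in splitter_power t S | power_coef f != 0]| <=
   \sum_i #|[set s in S | e i s != 0]|)%N.
Proof.
apply: (@leq_trans #|embed @: [set p in pairs | e p.1 p.2 != 0]|).
  apply/subset_leq_card/subsetP=> f; rewrite inE => /andP[/imset2P[i s _ sS ->]].
  rewrite power_coef_embed_at // => es_neq0.
  by apply/imsetP; exists (i, s); rewrite ?inE ?sS.
apply: leq_trans (leq_imset_card _ _) _.
under [in X in (_ <= X)%N]eq_bigr do rewrite -sum1_card.
rewrite pair_big_dep -sum1_card.
by apply/eq_leq/eq_bigl=> p; rewrite !inE.
Qed.

End PowerCoef.

Lemma completely_splits_power t k (S : {set G}) :
  completely_splits k M S ->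
  completely_splits (t * k) M (splitter_power t S).
Proof.
move=> splitS g.
have [e splits_e] := fin_all_exists (fun i => exists_splitting_coef0 (g i) splitS).
have e0 i : e i 0 = 0 by case: (splits_e i).
exists (power_coef S e); split; [|split].
- move=> f /imset2P[i s _ sS ->]; rewrite power_coef_embed_at //.
  by case: (splits_e i) => -[/(_ s sS)].
- apply: leq_trans (card_power_support S e0) _.
  rewrite -[t in (_ <= t * k)%N]card_ord -sum_nat_const.
  by apply: leq_sum => i _; case: (splits_e i) => -[].
- rewrite sum_splitter_power_coef {1}(ffun_sum_embed_at g).
  by apply: eq_bigr => i _; case: (splits_e i) => -[_ _ <-].
Qed.

End SplitterPower.

Theorem theorem16 (G : finZmodType) (M : seq int) (S : {set G}) (t : nat) :
  (0 \notin M)%R ->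
  completely_splits 1 M S ->
  (0 < t)%N ->
  completely_splits t M (splitter_power t S).
Proof.
move=> _ splitS _; have := completely_splits_power (t := t) splitS.
by rewrite muln1.
Qed.
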